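(* Let $\lambda,\mu\in DP$ with $D_\mu\subseteq D_\lambda$. Then $c(T)\le c(T_{\lambda/\mu})$ in lexicographic order for all amenable tableaux $T$ of shape $D_{\lambda/\mu}$. Moreover, if $T$ is an amenable tableau of shape $D_{\lambda/\mu}$ with $c(T)=c(T_{\lambda/\mu})$, then $T^{(i)}=P_i(\lambda/\mu)$ for all $i$.
   Context: $DP$: partitions with distinct parts (including $\emptyset$). Shifted diagram $D_\lambda=\{(i,j):1\le i\le\ell(\lambda),\ i\le j\le i+\lambda_i-1\}$ (row $i$, column $j$); $D_{\lambda/\mu}=D_\lambda\setminus D_\mu$. Alphabet $\mathcal A=\{1'<1<2'<2<\cdots\}$, $|x|$ the unmarked version of a letter. A tableau of shape $D$ is $T:D\to\mathcal A$, weakly increasing along rows and down columns, each unmarked $k$ at most once per column, each marked $k'$ at most once per row; content $c(T)=(c_1,c_2,\dots)$, $c_i$ = number of entries $i$ or $i'$ (trailing zeros omitted). $T^{(i)}=\{(x,y):|T(x,y)|=i\}$. Reading word $w=w(T)=w_1\cdots w_n$: read rows left to right, from the bottom row to the top row. Statistics: $m_i(0)=0$; for $1\le j\le n$, $m_i(j)$ = number of letters $i$ in $w_{n-j+1}\cdots w_n$; for $n<j\le 2n$, $m_i(j)=m_i(n)+$ number of letters $i'$ in $w_1\cdots w_{j-n}$. For $k>1$, $w$ is $k$-amenable if: (a) for $0\le j\le n-1$, $m_k(j)=m_{k-1}(j)$ implies $w_{n-j}\notin\{k,k'\}$; (b) for $n\le j\le 2n-1$, $m_k(j)=m_{k-1}(j)$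 implies $w_{j-n+1}\notin\{k-1,k'\}$; (c) if $j$ is smallest with $w_j\in\{k',k\}$ then $w_j=k$; (d) if $j$ is smallest with $w_j\in\{(k-1)',k-1\}$ then $w_j=k-1$. $T$ is amenable if $w(T)$ is $k$-amenable for all $k>1$. The tableau $T_{\lambda/\mu}$: set $U_1=D_{\lambda/\mu}$; for $k=1,2,\dots$ let $P_k=\{(x,y)\in U_k:(x-1,y-1)\notin U_k\}$, set $T_{\lambda/\mu}(x,y)=k'$ if $(x+1,y)\in P_k$ and $=k$ otherwise for $(x,y)\in P_k$, and $U_{k+1}=U_k\setminus P_k$; write $P_k(\lambda/\mu)=P_k$. Lexicographic order on sequences: $\alpha\le\beta$ if $\alpha=\beta$ or there is $k$ with $\alpha_i=\beta_i$ for $i\le k$ and $\alpha_{k+1}<\beta_{k+1}$ (missing entries are $0$). *)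

From mathcomp Require Import all_boot.
Set Implicit Arguments. Unset Strict Implicit. Unset Printing Implicit Defensive.

(* Partitions with distinct parts: strictly decreasing seqs of positive nats. *)
Definition is_DP (lam : seq nat) : bool :=
  sorted (fun a b => b < a) lam && all (fun a => 0 < a) lam.

(* lambda_i, 1-indexed *)
Definition part (lam : seq nat) (i : nat) : nat := nth 0 lam i.-1.

(* Shifted diagram D_lambda, listed row by row (rows 1..l(lambda)),
   left to right in each row.  Cells are (row, column). *)
Definition shD (lam : seq nat) : seq (nat * nat) :=
  flatten [seq [seq (i, j) | j <- iota i (part lam i)] | i <- iota 1 (size lam)].

Definition skewD (lam mu : seq nat) : seq (nat * nat) :=
  [seq p <- shD lam | p \notin shD mu].

(* Letters of A = {1' < 1 < 2' < 2 < ...}: (k, false) is k, (k, true) is k'. *)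
Definition letter := (nat * bool)%type.
Definition rk (a : letter) : nat := a.1.*2 - a.2.

(* A tableau of shape D: a function defined on all cells (only its values on
   D matter). *)
Definition is_tableau (D : seq (nat * nat)) (T : nat * nat -> letter) : Prop :=
  [/\ (forall p, p \in D -> 0 < (T p).1),
      (forall x y y', (x, y) \in D -> (x, y') \in D -> y <= y' ->
         rk (T (x, y)) <= rk (T (x, y'))),
      (forall x x' y, (x, y) \in D -> (x', y) \in D -> x <= x' ->
         rk (T (x, y)) <= rk (T (x', y))),
      (forall x x' y k, (x, y) \in D -> (x', y) \in D ->
         T (x, y) = (k, false) -> T (x', y) = (k, false) -> x = x') &
      (forall x y y' k, (x, y) \in D -> (x, y') \in D ->
         T (x, y) = (k, true) -> T (x, y') = (k, true) -> y = y')].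

Definition content (D : seq (nat * nat)) (T : nat * nat -> letter) (i : nat) : nat :=
  count (fun p => (T p).1 == i) D.

Definition Tlevel (D : seq (nat * nat)) (T : nat * nat -> letter) (i : nat)
  (p : nat * nat) : bool := (p \in D) && ((T p).1 == i).

Definition reading (lam mu : seq nat) (T : nat * nat -> letter) : seq letter :=
  flatten [seq [seq T p | p <- skewD lam mu & p.1 == x] | x <- rev (iota 1 (size lam))].

Definition mstat (w : seq letter) (i j : nat) : nat :=
  let n := size w in
  if j <= n then count (pred1 (i, false)) (drop (n - j) w)
  else count (pred1 (i, false)) w + count (pred1 (i, true)) (take (j - n) w).

(* w_j, 1-indexed *)
Definition wl (w : seq letter) (j : nat) : letter := nth (0, false) w j.-1.

Definition k_amenable (k : nat) (w : seq letter) : Prop :=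
  let n := size w in
  [/\ (forall j, j <= n - 1 -> mstat w k j = mstat w k.-1 j ->
          (wl w (n - j)).1 != k),
      (forall j, n <= j <= 2 * n - 1 -> mstat w k j = mstat w k.-1 j ->
          wl w (j - n + 1) != (k.-1, false) /\ wl w (j - n + 1) != (k, true)),
      (forall j, 1 <= j <= n -> (wl w j).1 = k ->
          (forall j', 1 <= j' < j -> (wl w j').1 != k) -> wl w j = (k, false)) &
      (forall j, 1 <= j <= n -> (wl w j).1 = k.-1 ->
          (forall j', 1 <= j' < j -> (wl w j').1 != k.-1) -> wl w j = (k.-1, false))].

Definition amenable (lam mu : seq nat) (T : nat * nat -> letter) : Prop :=
  forall k, 1 < k -> k_amenable k (reading lam mu T).

(* The sets U_k and P_k.  Uset D k = U_{k+1} (so Uset D 0 = U_1 = D). *)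
Definition Pof (U : seq (nat * nat)) : seq (nat * nat) :=
  [seq p <- U | (p.1.-1, p.2.-1) \notin U].

Fixpoint Uset (D : seq (nat * nat)) (k : nat) : seq (nat * nat) :=
  match k with
  | 0 => D
  | k'.+1 => [seq p <- Uset D k' | p \notin Pof (Uset D k')]
  end.

(* P_k(lambda/mu), for k >= 1 *)
Definition Pk (lam mu : seq nat) (k : nat) : seq (nat * nat) :=
  Pof (Uset (skewD lam mu) k.-1).

(* The tableau T_{lambda/mu}: a cell p of D lies in P_k for a (unique) k with
   1 <= k <= |D| (each nonempty U_k loses at least one cell); then
   T(p) = k' if (x+1,y) in P_k and k otherwise.  Off D the value is junk. *)
Definition Tlm (lam mu : seq nat) (p : nat * nat) : letter :=
  match [seq k <- iota 1 (size (skewD lam mu)) | p \in Pk lam mu k] with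
  | k :: _ => (k, (p.1.+1, p.2) \in Pk lam mu k)
  | [::] => (0, false)
  end.

(* lexicographic order on sequences (indexed from 1, missing entries 0) *)
Definition lexle (a b : nat -> nat) : Prop :=
  (forall i, a i = b i) \/
  exists k, (forall i, 1 <= i <= k -> a i = b i) /\ a k.+1 < b k.+1.

From mathcomp Require Import all_boot zify.
From Stdlib Require Import Classical.

(* Entries of a tableau of shape D_(lambda/mu)
   strictly increase from (x-1,y-1) to (x,y), so every cell of U_k carries an
   entry >= k.  Suppose T and T_(lambda/mu) have the same content below i and,
   inductively, T^(j) = P_j for 0 < j < i.  A cell with entry i then lies in
   none of P_1, ..., P_(i-1), hence in U_i, but not in U_(i+1): so T^(i) is
   contained in P_i, whence c_i(T) <= |P_i| = c_i(T_(lambda/mu)), and equality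
   forces T^(i) = P_i. *)

Set Implicit Arguments.
Unset Strict Implicit.
Unset Printing Implicit Defensive.

Lemma count_le_in (T : eqType) (a b : pred T) (s : seq T) :
  {in s, forall x, a x -> b x} -> count a s <= count b s.
Proof.
move=> ab; rewrite (@eq_in_count _ a (predI a b)); last first.
  by move=> x xs /=; case ax: (a x); rewrite ?(ab x xs ax).
by apply: sub_count => x /andP[].
Qed.

Lemma count_eq_in (T : eqType) (a b : pred T) (s : seq T) :
  {in s, forall x, a x -> b x} -> count a s = count b s -> {in s, a =1 b}.
Proof.
elim: s => //= x s IHs ab ab_count.
have ab_s : {in s, forall y, a y -> b y} by move=> y ys; apply: ab; rewrite inE ys orbT.
have abx := ab x (mem_head x s); have le_s := count_le_in ab_s.
have ab_x : a x = b x.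
  by move: abx ab_count; case: (a x) => [/(_ isT) -> //|_]; case: (b x) => //=; lia.
move: ab_count; rewrite ab_x => /addnI /(IHs ab_s) ab_s' y.
by rewrite inE => /orP[/eqP -> //|]; apply: ab_s'.
Qed.

Lemma lexle_first_difference (a b : nat -> nat) : a 0 = b 0 ->
  (forall i, 0 < i -> (forall j, 0 < j < i -> a j = b j) -> a i <= b i) ->
  lexle a b.
Proof.
move=> ab0 ab_le.
case: (classic (exists i, (0 < i) && (a i != b i))) => [ex|all_eq]; last first.
  left=> -[//|i]; apply/eqP/negPn/negP => neq; apply: all_eq; exists i.+1; exact/andP.
right; case: (ex_minnP ex) => i /andP[i0 ab_i] i_min.
have ab_lt : forall j, 0 < j < i -> a j = b j.
  move=> j /andP[j0 ji]; apply/eqP/negPn/negP => neq.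
  by have := i_min j; rewrite j0 neq => /(_ isT); lia.
exists i.-1; split=> [j j_i|]; first by apply: ab_lt; lia.
by rewrite prednK // ltn_neqAle ab_i ab_le.
Qed.

Lemma mem_shD lam i j :
  ((i, j) \in shD lam) = [&& 0 < i, i <= size lam, i <= j & j < i + part lam i].
Proof.
apply/flatten_mapP/idP => [[i' + /mapP[j' + [-> ->]]]|/and4P[i0 i_lam ij j_lam]].
  by rewrite !mem_iota => /andP[? ?] /andP[? ?]; apply/and4P; split=> //; lia.
exists i; first by rewrite mem_iota; lia.
by apply/mapP; exists j; rewrite // mem_iota; lia.
Qed.

Lemma mem_skewD lam mu p :
  (p \in skewD lam mu) = (p \in shD lam) && (p \notin shD mu).
Proof. by rewrite mem_filter andbC. Qed.

Lemma skewD_row_gt0 lam mu p : p \in skewD lam mu -> 0 < p.1.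
Proof. by case: p => i j; rewrite mem_skewD mem_shD => /andP[/and4P[]]. Qed.

(* (x-1,y) lies in D_lambda because lambda_(x-1) > lambda_x. *)
Lemma skewD_corner lam mu x y : is_DP lam ->
  (x, y) \in skewD lam mu -> (x.-1, y.-1) \in skewD lam mu ->
  [/\ (x.-1, y) \in skewD lam mu, x.-1 < x & y.-1 < y].
Proof.
move=> /andP[lam_sorted _]; rewrite !mem_skewD !mem_shD.
move=> /andP[/and4P[x0 x_lam xy y_lam] _] /andP[/and4P[x0' _ xy' y_lam'] notin_mu].
rewrite /part in y_lam y_lam' notin_mu *.
have lam_dec : nth 0 lam x.-1 < nth 0 lam x.-2.
  have := (sortedP 0 lam_sorted) x.-2; rewrite (_ : x.-2.+1 = x.-1); last lia.
  by apply; lia.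
by split; lia.
Qed.

Lemma rk_chain_repeat (a b c : letter) : 0 < a.1 ->
  rk a <= rk b -> rk b <= rk c -> c.1 <= a.1 ->
  (exists k, a = (k, true) /\ b = (k, true)) \/
  (exists k, b = (k, false) /\ c = (k, false)).
Proof.
move: a b c => [ka []] [kb []] [kc []]; rewrite /rk /= => *; first [lia
  | by left; exists ka; split=> //; congr pair; lia
  | by right; exists kb; split=> //; congr pair; lia].
Qed.

(* The letters at (x-1,y-1), (x-1,y), (x,y) weakly increase; were the numbers
   not strictly increasing, row x-1 would repeat some k' or column y some k. *)
Lemma tableau_diag_lt lam mu T : is_DP lam -> is_tableau (skewD lam mu) T ->
  forall x y, (x, y) \in skewD lam mu -> (x.-1, y.-1) \in skewD lam mu ->
  (T (x.-1, y.-1)).1 < (T (x, y)).1.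
Proof.
move=> lam_DP [T_gt0 T_row T_col col_unmarked row_marked] x y xy_in diag_in.
have [up_in ltx lty] := skewD_corner lam_DP xy_in diag_in.
rewrite ltnNge; apply/negP => le_diag.
have [[k [Ediag Eup]]|[k [Eup Exy]]] := rk_chain_repeat (T_gt0 _ diag_in)
  (T_row _ _ _ diag_in up_in (leq_pred y)) (T_col _ _ _ up_in xy_in (leq_pred x)) le_diag.
- by have := row_marked _ _ _ k diag_in up_in Ediag Eup; lia.
- by have := col_unmarked _ _ _ k up_in xy_in Eup Exy; lia.
Qed.

Lemma mem_Pof U p : (p \in Pof U) = (p \in U) && ((p.1.-1, p.2.-1) \notin U).
Proof. by rewrite mem_filter andbC. Qed.

Lemma mem_UsetS D k p :
  (p \in Uset D k.+1) = (p \in Uset D k) && (p \notin Pof (Uset D k)).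
Proof. by rewrite /= mem_filter andbC. Qed.

Lemma Uset_subset D j k : j <= k -> {subset Uset D k <= Uset D j}.
Proof.
elim: k => [|k IHk]; first by rewrite leqn0 => /eqP ->.
rewrite leq_eqVlt => /orP[/eqP -> //|]; rewrite ltnS => /IHk sub_jk p.
by rewrite mem_UsetS => /andP[/sub_jk].
Qed.

Lemma Uset_sub D k : {subset Uset D k <= D}.
Proof. exact: Uset_subset (leq0n k). Qed.

Lemma Pof_Uset_inj D j k p :
  p \in Pof (Uset D j) -> p \in Pof (Uset D k) -> j = k.
Proof.
wlog jk : j k / j < k => [wlog_jk|].
  by case: (ltngtP j k) => // jk Pj Pk; [exact: wlog_jk Pj Pk | exact/esym/(wlog_jk k j)].
move=> Pj; rewrite mem_Pof => /andP[/(Uset_subset jk)].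
by rewrite mem_UsetS Pj andbF.
Qed.

(* Descend the diagonal from p; rows are positive, so this leaves U. *)
Lemma Pof_exists U p : {in U, forall q, 0 < q.1} -> p \in U ->
  exists q, q \in Pof U.
Proof.
move=> U_gt0; case: p => x y; elim: x y => [|x IHx] y p_in.
  by have := U_gt0 _ p_in.
case diag_in: ((x, y.-1) \in U); first exact: IHx diag_in.
by exists (x.+1, y); rewrite mem_Pof p_in diag_in.
Qed.

Lemma size_filter_notin_Pof_lt (U : seq (nat * nat)) : {in U, forall q, 0 < q.1} ->
  U != [::] -> size [seq r <- U | r \notin Pof U] < size U.
Proof.
move=> U_gt0 U_ne; have [p p_in] : exists p, p \in U.
  by case: U U_ne {U_gt0} => // p s _; exists p; rewrite mem_head.
have [q Pq] := Pof_exists U_gt0 p_in.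
have : has (predC (fun r => r \notin Pof U)) U.
  by apply/hasP; exists q; [move: Pq; rewrite mem_Pof => /andP[] | rewrite /= negbK].
by rewrite size_filter has_count -(count_predC (fun r => r \notin Pof U)); lia.
Qed.

Section Peeling.

Variable D : seq (nat * nat).
Hypothesis D_gt0 : {in D, forall p, 0 < p.1}.

Lemma size_Uset k : size (Uset D k) <= size D - k.
Proof.
elim: k => [|k IHk]; first by rewrite subn0.
have U_gt0 : {in Uset D k, forall q, 0 < q.1} by move=> q /Uset_sub /D_gt0.
case: (Uset D k =P [::]) => [U_nil|/eqP U_ne]; first by rewrite /= U_nil.
move/leq_trans/(_ IHk): (size_filter_notin_Pof_lt U_gt0 U_ne).
by rewrite subnS; case: (size D - k).
Qed.

Lemma Uset_size_nil : Uset D (size D) = [::].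
Proof. by apply/nilP; rewrite /nilp -leqn0 -(subnn (size D)) size_Uset. Qed.

Lemma Pof_Uset_cover p : p \in D -> exists2 j, j < size D & p \in Pof (Uset D j).
Proof.
move=> p_in; suff: forall n, p \notin Uset D n -> exists2 j, j < n & p \in Pof (Uset D j).
  by apply; rewrite Uset_size_nil.
elim=> [|n IHn]; first by rewrite /= p_in.
case Un: (p \in Uset D n).
  by rewrite mem_UsetS Un => /negPn Pn; exists n.
by move=> _; have [j jn Pj] := IHn (negbT Un); exists j => //; lia.
Qed.

End Peeling.

Lemma content0 D (T : nat * nat -> letter) :
  {in D, forall p, 0 < (T p).1} -> content D T 0 = 0.
Proof.
move=> T_gt0; apply/eqP; rewrite /content -leqn0 leqNgt -has_count.
by apply/hasPn => p /T_gt0; rewrite lt0n.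
Qed.

Section StandardTableau.

Variables lam mu : seq nat.
Local Notation D := (skewD lam mu).

Lemma Pk_sub i : {subset Pk lam mu i <= D}.
Proof. by move=> p; rewrite /Pk mem_Pof => /andP[/Uset_sub]. Qed.

Lemma Pk_cover p : p \in D -> exists j, p \in Pk lam mu j.+1.
Proof. by case/(Pof_Uset_cover (@skewD_row_gt0 lam mu)) => j _; exists j. Qed.

Lemma Tlm_number j p : p \in Pk lam mu j.+1 -> (Tlm lam mu p).1 = j.+1.
Proof.
move=> Pj; have Uj : p \in Uset D j by move: Pj; rewrite /Pk mem_Pof => /andP[].
have jD : j < size D.
  by move: (size_Uset (@skewD_row_gt0 lam mu) j); case: (Uset D j) Uj => // _ s _ /=; lia.
rewrite /Tlm; set ks := [seq k <- _ | _].
have : j.+1 \in ks by rewrite mem_filter Pj mem_iota; lia.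
case ks_def: ks => [//|k s] _ /=.
have : k \in ks by rewrite ks_def mem_head.
rewrite mem_filter mem_iota => /and3P[Pk k0 _].
by have := Pof_Uset_inj Pj Pk; lia.
Qed.

Lemma Tlm_numberE i p : p \in D -> 0 < i -> ((Tlm lam mu p).1 == i) = (p \in Pk lam mu i).
Proof.
move=> pD i0; have [j Pj] := Pk_cover pD; rewrite (Tlm_number Pj).
case: (eqVneq j.+1 i) => [<- //|ne]; apply/esym/negP => Pi.
by have := Pof_Uset_inj Pj Pi; move: ne => /eqP; lia.
Qed.

Lemma Tlm_number_gt0 p : p \in D -> 0 < (Tlm lam mu p).1.
Proof. by case/Pk_cover => j /Tlm_number ->. Qed.

End StandardTableau.

Section MaximalContent.

Variables (lam mu : seq nat) (T : nat * nat -> letter).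
Hypotheses (lam_DP : is_DP lam) (T_tableau : is_tableau (skewD lam mu) T).
Local Notation D := (skewD lam mu).

Lemma Uset_lt_number j p : p \in Uset D j -> j < (T p).1.
Proof.
have [T_gt0 _ _ _ _] := T_tableau.
elim: j p => [|j IHj] [x y]; first exact: T_gt0.
rewrite mem_UsetS mem_Pof => /andP[Uxy]; rewrite Uxy /= negbK => Udiag.
have := tableau_diag_lt lam_DP T_tableau (Uset_sub Uxy) (Uset_sub Udiag).
exact/leq_ltn_trans/(IHj _ Udiag).
Qed.

Definition levels_agree_below i :=
  forall j, 0 < j < i -> {in D, forall q, ((T q).1 == j) = (q \in Pk lam mu j)}.

Definition contents_agree_below i :=
  forall j, 0 < j < i -> content D T j = content D (Tlm lam mu) j.

Lemma level_sub_Pk i : 0 < i -> levels_agree_below i ->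
  {in D, forall p, (T p).1 == i -> p \in Pk lam mu i}.
Proof.
move=> i0 below p pD /eqP Tp; have [m Pm] := Pk_cover pD.
have Um : p \in Uset D m by move: Pm; rewrite /Pk mem_Pof => /andP[].
have := Uset_lt_number Um; rewrite Tp => mi.
have [lt_mi|ge_mi] := ltnP m.+1 i; last by have -> : i = m.+1 by lia.
have := below m.+1; rewrite lt_mi => /(_ isT p pD).
by rewrite Pm Tp => /eqP; lia.
Qed.

Lemma content_le_Tlm i : 0 < i -> levels_agree_below i ->
  content D T i <= content D (Tlm lam mu) i.
Proof.
move=> i0 below; rewrite /content (@eq_in_count _ (fun p => (Tlm lam mu p).1 == i)
  (fun p => p \in Pk lam mu i)) => [|p pD]; last exact: Tlm_numberE.
exact: count_le_in (level_sub_Pk i0 below).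
Qed.

Lemma levels_agree_of_contents i : contents_agree_below i -> levels_agree_below i.
Proof.
elim: i => [_ j|i IHi contents j]; first by case: j.
have below : levels_agree_below i.
  by apply: IHi => k /andP[k0 ki]; apply: contents; rewrite k0 ltnW.
case/andP=> j0; rewrite ltnS leq_eqVlt => /orP[/eqP ji|ji]; last first.
  by apply: below; rewrite j0.
rewrite ji in j0 *; apply: count_eq_in; first exact: level_sub_Pk j0 below.
have := contents i; rewrite j0 ltnSn /content => /(_ isT) ->.
by apply: eq_in_count => p pD; apply: Tlm_numberE.
Qed.

End MaximalContent.

Theorem lemma3p4 (lam mu : seq nat) :
  is_DP lam -> is_DP mu -> {subset shD mu <= shD lam} ->
  (forall T : nat * nat -> letter,
     is_tableau (skewD lam mu) T -> amenable lam mu T ->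
     lexle (content (skewD lam mu) T) (content (skewD lam mu) (Tlm lam mu))) /\
  (forall T : nat * nat -> letter,
     is_tableau (skewD lam mu) T -> amenable lam mu T ->
     (forall i, content (skewD lam mu) T i = content (skewD lam mu) (Tlm lam mu) i) ->
     forall i, 0 < i -> forall p, Tlevel (skewD lam mu) T i p = (p \in Pk lam mu i)).
Proof.
move=> lam_DP _ _; split=> T T_tableau _.
- have [T_gt0 _ _ _ _] := T_tableau.
  apply: lexle_first_difference => [|i i0 /(levels_agree_of_contents lam_DP T_tableau)].
    by rewrite !content0 // => p; apply: Tlm_number_gt0.
  exact: (content_le_Tlm lam_DP T_tableau i0).
- move=> contents i i0 p; rewrite /Tlevel.
  case pD: (p \in skewD lam mu); last by apply/esym/negP => /Pk_sub; rewrite pD.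
  apply: (levels_agree_of_contents lam_DP T_tableau (i := i.+1)) => //.
  by rewrite i0 ltnSn.
Qed.
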